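(* Assume $\sigma_1\equiv0$. Fix $(t,x,y)$ and suppose $u\mapsto\Psi_{t,x,y}(u):=m(t,y,u)+\frac{\mu(t,y)^2-\sigma(t,y,u)^2\sigma_2(t,y)^2A(x)^2}{2\sigma_2(t,y)^2A(x)}$ is strictly concave on $[0,I]$. Then the optimal reinsurance strategy (the maximiser of $\Psi_{t,x,y}$ over $[0,I]$) is $$u^*(t,x,y)=\begin{cases}0,&(t,x,y)\in A_0,\\ \hat u(t,x,y),&(t,x,y)\in[0,T]\times\mathbb R^2\setminus(A_0\cup A_I),\\ I,&(t,x,y)\in A_I,\end{cases}$$ where $A_0=\{(t,x,y): \frac{\partial m}{\partial u}(t,y,0)\le A(x)\sigma(t,y,0)\frac{\partial\sigma}{\partial u}(t,y,0)\}$, $A_I=\{(t,x,y): \frac{\partial m}{\partial u}(t,y,I)\ge A(x)\sigma(t,y,I)\frac{\partial\sigma}{\partial u}(t,y,I)\}$, and $\hat u(t,x,y)$ is the unique solution $u$ of $\frac{\partial m}{\partial u}(t,y,u)=A(x)\sigma(t,y,u)\frac{\partial\sigma}{\partial u}(t,y,u)$.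
   Context: $I\in(0,\infty]$; $m(t,y,u)$ and $\sigma(t,y,u)$, $u\in[0,I]$, are continuously differentiable drift and volatility of the insurer's surplus under retention level $u$; $\mu(t,y),\sigma_2(t,y)>0$ are the drift and the (independent) volatility of the risky asset, and the risky asset's loading $\sigma_1$ on the insurance Brownian motion is zero (conditionally independent markets). The insurer's surplus with investment $a_t$ is $dX_t=\{m(t,Y_t,u_t)+a_t\mu(t,Y_t)\}dt+\sigma(t,Y_t,u_t)dW^1_t+a_t\sigma_2(t,Y_t)dW^2_t$, and $\Psi_{t,x,y}$ is the function to be maximised in the HJB equation under the ansatz $V(t,x,y)=U(x)\tilde V(t,y)$. $U$ is a SAHARA utility: $A(x):=-U''(x)/U'(x)=\alpha/\sqrt{b^2+(x-d)^2}$, $\alpha>0$, $b>0$, $d\in\mathbb R$. *)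

From mathcomp Require Import all_boot all_order all_algebra.
From mathcomp Require Import all_classical all_reals all_analysis.
Set Implicit Arguments. Unset Strict Implicit. Unset Printing Implicit Defensive.
Import Order.TTheory GRing.Theory Num.Theory numFieldNormedType.Exports.
Local Open Scope ring_scope.

Definition sahara_A {R : realType} (alpha b d x : R) : R :=
  alpha / Num.sqrt (b ^+ 2 + (x - d) ^+ 2).

Definition in_ret {R : realType} (I : \bar R) (u : R) : Prop :=
  0 <= u /\ (u%:E <= I)%E.

Definition Psi {R : realType} (m sig : R -> R -> R -> R) (mu sig2 : R -> R -> R)
  (Ax t y u : R) : R :=
  m t y u + (mu t y ^+ 2 - sig t y u ^+ 2 * sig2 t y ^+ 2 * Ax ^+ 2)
            / (2 * sig2 t y ^+ 2 * Ax).

Definition strictly_concave_on {R : realType} (D : R -> Prop) (f : R -> R) : Prop :=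
  forall a c lam : R, D a -> D c -> a != c -> 0 < lam < 1 ->
    lam * f a + (1 - lam) * f c < f (lam * a + (1 - lam) * c).

Definition is_maximiser {R : realType} (D : R -> Prop) (f : R -> R) (v : R) : Prop :=
  D v /\ forall u, D u -> f u <= f v.

(* The map u |-> Psi(u) has derivative m_u - A sigma sigma_u, so the three
   regimes are the first-order optimality conditions of a strictly concave C^1
   function on the interval [0, I].  Strict concavity puts the graph strictly
   below every tangent, hence a critical point is the unique maximiser and a
   maximiser at an end point is characterised by the sign of the derivative
   there; continuity of the derivative carries the sign information to the
   maximiser in the limit, and the intermediate value theorem produces the
   interior critical point when I is finite. *)
From mathcomp Require Import all_boot all_order all_algebra.
From mathcomp Require Import all_classical all_reals all_analysis.
From mathcomp Require Import ring lra.
Import Order.TTheory GRing.Theory Num.Theory numFieldNormedType.Exports.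
Set Implicit Arguments. Unset Strict Implicit.
Local Open Scope ring_scope.

Lemma in_ret_midpoint (R : realType) (I : \bar R) (a c : R) :
  in_ret I a -> in_ret I c -> in_ret I ((a + c) / 2).
Proof.
move=> [a0 aI] [c0 cI]; split; first lra.
case: I aI cI => [r| |] //=; last by move=> *; exact: leey.
by rewrite !lee_fin => *; lra.
Qed.

Lemma in_ret_le (R : realType) (I : \bar R) (u v : R) :
  0 <= u -> u <= v -> in_ret I v -> in_ret I u.
Proof.
by move=> u0 uv [_ vI]; split => //; apply: le_trans vI; rewrite lee_fin.
Qed.

Lemma derive_derive1 (R : realType) (g : R -> R) (a v : R) :
  derivable g a 1 -> 'D_v g a = v * derive1 g a.
Proof. by move=> /derivable1_diffP dg; rewrite deriveE // diff1E. Qed.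

Lemma le_derive_of_secant (R : realType) (g : R -> R) (a v K : R) :
  derivable g a v ->
  (forall h, 0 < h < 1 -> h * K <= g (h * v + a) - g a) -> K <= 'D_v g a.
Proof.
move=> dg secant_ge.
have := closed_cvg _ (@closed_ge _ K) _ _ (cvg_dnbhs_at_right dg); apply.
near=> h.
have h0 : 0 < h by near: h; exact: nbhs_right_gt.
have h1 : h < 1 by near: h; exact: nbhs_right_lt.
rewrite /= -[h *: v]/(h * v) -[_ *: (_ - _)]/(_ * _).
by rewrite -(ler_pM2l h0) mulrA mulfV ?gt_eqF // mul1r secant_ge ?h0.
Unshelve. all: by end_near.
Qed.

Lemma le0_at_left_end (R : realType) (f : R -> R) (v w : R) :
  continuous f -> v < w -> (forall u, v < u < w -> f u < 0) -> f v <= 0.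
Proof.
move=> cf vw f_lt0.
have := closed_cvg _ (@closed_le _ 0) _ _ (cvg_at_right_filter (cf v)); apply.
near=> h; apply/ltW/f_lt0; apply/andP; split.
- by near: h; exact: nbhs_right_gt.
- by near: h; exact: nbhs_right_lt.
Unshelve. all: by end_near.
Qed.

Lemma ge0_at_right_end (R : realType) (f : R -> R) (v w : R) :
  continuous f -> w < v -> (forall u, w < u < v -> 0 < f u) -> 0 <= f v.
Proof.
move=> cf wv f_gt0.
have := closed_cvg _ (@closed_ge _ 0) _ _ (cvg_at_left_filter (cf v)); apply.
near=> h; apply/ltW/f_gt0; apply/andP; split.
- by near: h; exact: nbhs_left_gt.
- by near: h; exact: nbhs_left_lt.
Unshelve. all: by end_near.
Qed.

Section StrictlyConcaveOnRetention.
Variables (R : realType) (I : \bar R) (g : R -> R).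
Hypothesis g_derivable : forall u, derivable g u 1.
Hypothesis g_concave : strictly_concave_on (in_ret I) g.
Local Notation g' := (derive1 g).

Lemma concave_tangent_le (a c : R) :
  in_ret I a -> in_ret I c -> g c - g a <= g' a * (c - a).
Proof.
move=> ha hc; have [<-|ac] := eqVneq a c; first by rewrite !subrr mulr0.
rewrite mulrC -derive_derive1 //; apply: le_derive_of_secant.
  exact/diff_derivable/derivable1_diffP.
move=> h /andP[h0 h1].
have := @g_concave c a h hc ha; rewrite eq_sym ac h0 h1 => /(_ isT isT) /ltW.
have -> : h * c + (1 - h) * a = h * (c - a) + a by ring.
lra.
Qed.

(* Strict concavity puts the midpoint strictly above the chord from [a] to [c];
   the tangent bound at the midpoint then becomes strict. *)
Lemma concave_tangent_lt (a c : R) : in_ret I a -> in_ret I c -> a != c ->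
  g c - g a < g' a * (c - a).
Proof.
move=> ha hc ac.
have := concave_tangent_le ha (in_ret_midpoint ha hc).
have half_in : 0 < (1 / 2 : R) < 1 by apply/andP; split; lra.
have := @g_concave a c (1 / 2) ha hc ac half_in.
have -> : 1 / 2 * a + (1 - 1 / 2) * c = (a + c) / 2 by field.
have -> : (a + c) / 2 - a = (c - a) / 2 by field.
rewrite mulrA; lra.
Qed.

Lemma is_maximiser_of_tangent (v : R) : in_ret I v ->
  (forall u, in_ret I u -> g' v * (u - v) <= 0) -> is_maximiser (in_ret I) g v.
Proof.
move=> hv tangent_le0; split => // u hu.
have := concave_tangent_le hv hu; have := tangent_le0 u hu; lra.
Qed.

Lemma maximiser_derive_mul_gt0 (v u : R) : is_maximiser (in_ret I) g v ->
  in_ret I u -> u != v -> 0 < g' u * (v - u).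
Proof.
move=> [hv vmax] hu uv.
have := concave_tangent_lt hu hv uv; have := vmax u hu; lra.
Qed.

Lemma derive_eq0_uniq (u1 u2 : R) : in_ret I u1 -> in_ret I u2 ->
  g' u1 = 0 -> g' u2 = 0 -> u1 = u2.
Proof.
move=> h1 h2 d1 d2; apply/eqP/negPn/negP => u12.
have := concave_tangent_lt h1 h2 u12; have := concave_tangent_lt h2 h1.
by rewrite eq_sym u12 d1 d2 !mul0r => /(_ isT); lra.
Qed.

Hypothesis g'_continuous : continuous g'.

Lemma maximiser_derive_le0 (v : R) : is_maximiser (in_ret I) g v ->
  (v%:E < I)%E -> g' v <= 0.
Proof.
move=> vmax vI; have [v0 _] := vmax.1.
have [w vw wI] : exists2 w, v < w & (w%:E <= I)%E.
  case: I vI => [r||] //= vr; last by exists (v + 1); rewrite ?leey //; lra.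
  by exists r; rewrite // -lte_fin.
apply: (le0_at_left_end g'_continuous vw) => u /andP[vu uw].
have hu : in_ret I u by apply: (@in_ret_le _ _ u w); [lra|lra|split=> //; lra].
have := maximiser_derive_mul_gt0 vmax hu (negbT (gt_eqF vu)); nra.
Qed.

Lemma maximiser_derive_ge0 (v : R) : is_maximiser (in_ret I) g v ->
  0 < v -> 0 <= g' v.
Proof.
move=> vmax v0; apply: (ge0_at_right_end g'_continuous v0) => u /andP[u0 uv].
have hu : in_ret I u := in_ret_le (ltW u0) (ltW uv) vmax.1.
have := maximiser_derive_mul_gt0 vmax hu (negbT (lt_eqF uv)); nra.
Qed.

Hypothesis I_gt0 : (0 < I)%E.

Lemma maximiserP (v : R) :
  is_maximiser (in_ret I) g v <->
  [\/ g' 0 <= 0 /\ v = 0,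
      (exists r, I = r%:E /\ 0 <= g' r) /\ v%:E = I
    | [/\ ~ (g' 0 <= 0), ~ (exists r, I = r%:E /\ 0 <= g' r),
          in_ret I v & g' v = 0]].
Proof.
have ret0 : in_ret I 0 by split => //; exact: ltW.
split=> [vmax | ].
- have [v_ge0 vI] := vmax.1.
  have [g'0_le0 | g'0_gt0] := leP (g' 0) 0.
    apply: Or31; split => //; apply/eqP/negPn/negP => v_neq0.
    have := maximiser_derive_mul_gt0 vmax ret0; rewrite eq_sym v_neq0.
    by move=> /(_ isT); nra.
  have [[r [Ir g'r_ge0]] | noAI] := pselect (exists r, I = r%:E /\ 0 <= g' r).
    apply: Or32; split; first by exists r.
    have ret_r : in_ret I r by rewrite Ir; split; [rewrite -lee_fin -Ir ltW|].
    move: vI; rewrite Ir lee_fin => vr; congr _%:E.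
    apply/eqP/negPn/negP => v_neq_r.
    have := maximiser_derive_mul_gt0 vmax ret_r; rewrite eq_sym v_neq_r.
    by move=> /(_ isT); nra.
  have v_gt0 : 0 < v.
    rewrite lt_neqAle v_ge0 andbT; apply/negP => /eqP v0.
    by have := maximiser_derive_le0 vmax; rewrite -v0 => /(_ I_gt0); lra.
  have vI_lt : (v%:E < I)%E.
    rewrite lt_neqAle vI andbT; apply/negP => /eqP vI_eq; apply: noAI.
    by exists v; split => //; exact: maximiser_derive_ge0.
  apply: Or33; split => //.
  by apply/eqP; rewrite eq_le maximiser_derive_le0 ?maximiser_derive_ge0.
- case=> [[g'0_le0 ->] | [[r [Ir g'r_ge0]] vI] | [_ _ hv g'v0]].
  + by apply: is_maximiser_of_tangent => // u [u_ge0 _]; rewrite subr0; nra.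
  + have -> : v = r by move: vI; rewrite Ir => -[].
    apply: is_maximiser_of_tangent.
      by split; [rewrite -lee_fin -Ir ltW | rewrite Ir].
    by move=> u [_]; rewrite Ir lee_fin => ur; nra.
  + by apply: is_maximiser_of_tangent => // u _; rewrite g'v0 mul0r.
Qed.

Lemma derive_eq0_exists (r : R) : I = r%:E -> 0 < g' 0 -> g' r < 0 ->
  exists u, in_ret I u /\ g' u = 0.
Proof.
move=> Ir g'0_gt0 g'r_lt0.
have r_ge0 : 0 <= r by rewrite -lee_fin -Ir ltW.
have g'_cont_0r : {within `[0, r], continuous g'}%classic.
  exact: continuous_subspaceT.
have [|u] := IVT r_ge0 g'_cont_0r (v := 0).
  by rewrite ge_min le_max (ltW g'r_lt0) (ltW g'0_gt0) orbT.
rewrite in_itv /= => /andP[u_ge0 u_le_r] g'u0.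
by exists u; split => //; split; rewrite // Ir lee_fin.
Qed.

End StrictlyConcaveOnRetention.

Lemma sahara_A_gt0 (R : realType) (alpha b d x : R) :
  0 < alpha -> 0 < b -> 0 < sahara_A alpha b d x.
Proof.
move=> alpha_gt0 b_gt0; rewrite divr_gt0 // sqrtr_gt0.
by rewrite ltr_wpDr ?sqr_ge0 ?exprn_gt0.
Qed.

Lemma is_derive_Psi (R : realType) (m sig : R -> R -> R -> R)
    (mu sig2 : R -> R -> R) (A t y : R) :
  A != 0 -> sig2 t y != 0 ->
  (forall u : R, derivable (m t y) u 1) ->
  (forall u : R, derivable (sig t y) u 1) ->
  forall u : R, is_derive u 1 (Psi m sig mu sig2 A t y)
    (derive1 (m t y) u - A * sig t y u * derive1 (sig t y) u).
Proof.
move=> A_neq0 sig2_neq0 dm dsig u.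
set M := m t y; set S := sig t y.
have -> : Psi m sig mu sig2 A t y =
    M + (cst (mu t y ^+ 2 / (2 * sig2 t y ^+ 2 * A)) - (A / 2) \*: S ^+ 2).
  apply/funext => w; rewrite /Psi /M /S !fctE /= -[(A / 2) *: _]/(_ * _).
  by field; rewrite A_neq0 sig2_neq0.
have dM : is_derive u 1 M (derive1 M u) by rewrite derive1E; exact: derivableP.
have dS : is_derive u 1 S (derive1 S u) by rewrite derive1E; exact: derivableP.
apply: (is_derive_eq (is_deriveD dM (is_deriveB (is_derive_cst _ u 1)
                        (is_deriveZ (A / 2) (is_deriveX 2 dS))))).
rewrite -[_ *: _]/(_ * _) -[((2%:R * S u ^+ 1) *: _)]/(_ * _) expr1.
by field.
Qed.

Theorem proposition5p6 (R : realType) (T : R) (I : \bar R)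
  (m sig : R -> R -> R -> R) (mu sig2 : R -> R -> R) (alpha b d : R)
  (t x y : R) :
  (0 < I)%E -> 0 < alpha -> 0 < b ->
  (forall t' y', forall u, derivable (m t' y') u 1) ->
  (forall t' y', continuous (derive1 (m t' y') : R -> R)) ->
  (forall t' y', forall u, derivable (sig t' y') u 1) ->
  (forall t' y', continuous (derive1 (sig t' y') : R -> R)) ->
  (forall t' y', 0 < sig2 t' y') ->
  0 <= t <= T ->
  strictly_concave_on (in_ret I)
    (Psi m sig mu sig2 (sahara_A alpha b d x) t y) ->
  let A := sahara_A alpha b d x in
  let foc := fun u => derive1 (m t y) u = A * sig t y u * derive1 (sig t y) u in
  let inA0 := derive1 (m t y) 0 <= A * sig t y 0 * derive1 (sig t y) 0 in
  let inAI := exists r : R, I = r%:E /\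
                A * sig t y r * derive1 (sig t y) r <= derive1 (m t y) r in
  (forall v, is_maximiser (in_ret I) (Psi m sig mu sig2 A t y) v <->
     [\/ inA0 /\ v = 0,
         inAI /\ v%:E = I
       | [/\ ~ inA0, ~ inAI, in_ret I v & foc v]])
  /\ (~ inA0 -> ~ inAI ->
        forall u1 u2, in_ret I u1 -> in_ret I u2 -> foc u1 -> foc u2 -> u1 = u2)
  /\ (I \is a fin_num -> ~ inA0 -> ~ inAI -> exists u, in_ret I u /\ foc u).
Proof.
move=> I_gt0 alpha_gt0 b_gt0 dm dm_cont dsig dsig_cont sig2_gt0 _ Psi_concave
  A foc inA0 inAI.
have A_gt0 : 0 < A by exact: sahara_A_gt0.
set P := Psi m sig mu sig2 A t y.
have dP := is_derive_Psi mu (lt0r_neq0 A_gt0) (lt0r_neq0 (sig2_gt0 t y))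
  (dm t y) (dsig t y).
have P_derivable (u : R) : derivable P u 1 by case: (dP u).
have P'E : derive1 P =
    fun u => derive1 (m t y) u - A * sig t y u * derive1 (sig t y) u.
  by apply/funext => u; rewrite derive1E; exact: derive_val.
have P'_cont : continuous (derive1 P).
  rewrite P'E => u; apply: cvgB; first exact: dm_cont.
  apply: cvgM; last exact: dsig_cont.
  apply: cvgM; first exact: cvg_cst.
  by apply: differentiable_continuous; apply/derivable1_diffP.
have -> : inA0 = (derive1 P 0 <= 0) by rewrite /inA0 P'E subr_le0.
have -> : inAI = exists r, I = r%:E /\ 0 <= derive1 P r.
  rewrite propeqE P'E.
  by split=> -[r [Ir r_ge]]; exists r; rewrite subr_ge0 in r_ge *.
have -> : foc = fun u => derive1 P u = 0.
  apply/funext => u; rewrite propeqE P'E /foc.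
  by split=> [->|/subr0_eq //]; rewrite subrr.
split; first exact: maximiserP.
split=> [_ _ u1 u2 h1 h2 | /fineK I_fin not_inA0 not_inAI].
  exact: (derive_eq0_uniq P_derivable Psi_concave h1 h2).
apply: (derive_eq0_exists P'_cont I_gt0 (esym I_fin)).
  by rewrite ltNge; apply/negP.
rewrite ltNge; apply/negP.
by move=> P'I_ge0; apply: not_inAI; exists (fine I).
Qed.
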